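(* Let $p$ be a prime. The group scheme $G_p^{ab}$ is abelian and is represented by $\mathcal A_{p*}/I_p^{\langle0\rangle}$. Similarly, for each $k\ge1$, $G_p^{[k]}$ is an abelian group scheme represented by $\mathcal A_p\langle k\rangle_*/I_p^{\langle k\rangle}$.
   Context: Dual Steenrod algebra: $\mathcal A_{2*}=\mathbb F_2[\zeta_1,\zeta_2,\dots]$ ($\deg\zeta_i=2^i-1$); for odd $p$, $\mathcal A_{p*}=E(\tau_0,\tau_1,\dots)\otimes\mathbb F_p[\xi_1,\xi_2,\dots]$ ($\deg\tau_i=2p^i-1$, $\deg\xi_i=2(p^i-1)$), coproduct (with $\zeta_0=\xi_0=1$) $\mu(\zeta_n)=\sum_{k=0}^n\zeta_{n-k}^{2^k}\otimes\zeta_k$, $\mu(\xi_n)=\sum_{k=0}^n\xi_{n-k}^{p^k}\otimes\xi_k$, $\mu(\tau_n)=\sum_{k=0}^n\xi_{n-k}^{p^k}\otimes\tau_k+\tau_n\otimes1$. $G_p$ is the affine group scheme represented by $\mathcal A_{p*}$ (on graded commutative $\mathbb F_p$-algebras). For $k\ge1$, $\mathcal A_p\langle k\rangle_*$ is the Hopf subalgebra $\mathbb F_2[\zeta_i^{2^k}:i\ge1]$ ($p=2$), $E(\tau_0)\otimes\mathbb F_p[\xi_i^p:i\ge1]$ ($p$ odd, $k=1$), $\mathbb F_p[\xi_i^{p^k}:i\ge1]$ ($p$ odd, $k\ge2$), and $G_p^{\langle k\rangle}$ is the group scheme it represents; set $\mathcal A_p\langle0\rangle_*=\mathcal A_{p*}$,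 $G_p^{\langle0\rangle}=G_p$. $\rho_0:G_p\to G_p^{\langle1\rangle}$ and $\rho_k:G_p^{\langle k\rangle}\to G_p^{\langle k+1\rangle}$ are the morphisms induced by the inclusions $\mathcal A_p\langle1\rangle_*\subset\mathcal A_{p*}$, $\mathcal A_p\langle k+1\rangle_*\subset\mathcal A_p\langle k\rangle_*$; $G_p^{ab}=\ker\rho_0$ and $G_p^{[k]}=\ker\rho_k$. $I_p^{\langle k\rangle}\subset\mathcal A_p\langle k\rangle_*$ is the ideal generated by all $\zeta_n^{2^{k+1}}$ ($p=2$); by $\tau_0$ and all $\xi_n^p$ ($p$ odd, $k=0$); by all $\xi_n^{p^{k+1}}$ ($p$ odd, $k\ge1$). *)

From HB Require Import structures.
From mathcomp Require Import all_boot all_order all_algebra.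
Set Implicit Arguments. Unset Strict Implicit. Unset Printing Implicit Defensive.
Import Order.TTheory GRing.Theory Num.Theory.
Local Open Scope ring_scope.

Definition is_gcalg (p : nat) (R : pzRingType) (hom : int -> pred R) : Prop :=
  (p%:R : R) = 0 /\
  (forall d, 0 \in hom d) /\
  (forall d x y, x \in hom d -> y \in hom d -> x - y \in hom d) /\
  (forall m n x y, x \in hom m -> y \in hom n -> x * y \in hom (m + n)) /\
  (1 : R) \in hom 0 /\
  (forall m n x y, x \in hom m -> y \in hom n ->
        x * y = (-1) ^+ (`|m| * `|n|)%N * (y * x)) /\
  (forall x : R, exists (s : seq int) (f : int -> R),
        (forall d, f d \in hom d) /\ x = \sum_(d <- s) f d) /\
  (forall (s : seq int) (f : int -> R), uniq s -> (forall d, f d \in hom d) ->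
        \sum_(d <- s) f d = 0 -> forall d, d \in s -> f d = 0).

(* ---------- Points of G_p^<k> ----------
   A_p<k>_* is free graded commutative on the generators
     x_i (i >= 1) := zeta_i^(2^k) (p = 2), resp. xi_i^(p^k) (p odd),
     t_i := tau_i (p odd, k = 0, all i >= 0), resp. t_0 := tau_0 (p odd, k = 1).
   Hence a graded algebra map A_p<k>_* -> R is the same as a choice of
   homogeneous elements of the right degrees for these generators.
   A point is encoded as a pair (x, t) of functions nat -> R; only the
   values at the generators listed above are meaningful. *)
Definition xdeg (p k i : nat) : nat :=
  if p == 2%N then (2 ^ k * (2 ^ i - 1))%N else (p ^ k * (2 * (p ^ i - 1)))%N.
Definition tdeg (p i : nat) : nat := (2 * p ^ i - 1)%N.
Definition has_tau (p k i : nat) : bool :=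
  (p != 2%N) && ((k == 0%N) || ((k == 1%N) && (i == 0%N))).

Definition pt (R : pzRingType) := ((nat -> R) * (nat -> R))%type.

Definition is_point (p k : nat) (R : pzRingType) (hom : int -> pred R) (f : pt R) : Prop :=
  (forall i, (0 < i)%N -> f.1 i \in hom (xdeg p k i)%:Z) /\
  (forall i, has_tau p k i -> f.2 i \in hom (tdeg p i)%:Z).

Definition samept (p k : nat) (R : pzRingType) (f g : pt R) : Prop :=
  (forall i, (0 < i)%N -> f.1 i = g.1 i) /\
  (forall i, has_tau p k i -> f.2 i = g.2 i).

Definition xv (R : pzRingType) (f : pt R) (i : nat) : R :=
  if i == 0%N then 1 else f.1 i.

(* group law  f * g = mult o (f (x) g) o coproduct, using
   mu(x_n) = sum_j x_{n-j}^(p^j) (x) x_j,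
   mu(t_n) = sum_j x_{n-j}^(p^j) (x) t_j + t_n (x) 1 *)
Definition ptmul (p : nat) (R : pzRingType) (f g : pt R) : pt R :=
  (fun n => \sum_(j < n.+1) xv f (n - j) ^+ (p ^ j) * xv g j,
   fun n => \sum_(j < n.+1) xv f (n - j) ^+ (p ^ j) * g.2 j + f.2 n).

Definition ptone (R : pzRingType) : pt R := (fun _ => 0, fun _ => 0).

(* rho_k : G_p^<k> -> G_p^<k+1>, restriction along A_p<k+1>_* in A_p<k>_*:
   generator x_i of A<k+1> equals x_i^p in A<k>; tau_0 (when present in
   A<k+1>, i.e. p odd, k = 0) maps to tau_0. *)
Definition rho (p : nat) (R : pzRingType) (f : pt R) : pt R :=
  (fun i => f.1 i ^+ p, fun i => f.2 i).

(* f lies in ker rho_k (= G_p^ab for k = 0, = G_p^[k] for k >= 1) *)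
Definition in_ker (p k : nat) (R : pzRingType) (f : pt R) : Prop :=
  samept p k.+1 (rho p f) (ptone R).

(* f : A_p<k>_* -> R vanishes on the ideal I_p^<k>, i.e. factors through
   A_p<k>_* / I_p^<k>; it suffices to kill the generators of the ideal. *)
Definition kills_I (p k : nat) (R : pzRingType) (f : pt R) : Prop :=
  if p == 2%N then
    (* zeta_n^(2^(k+1)) = x_n^2 *)
    forall n, (0 < n)%N -> f.1 n ^+ 2 = 0
  else if k == 0%N then
    (* tau_0 and xi_n^p *)
    f.2 0%N = 0 /\ forall n, (0 < n)%N -> f.1 n ^+ p = 0
  else
    (* xi_n^(p^(k+1)) = x_n^p *)
    forall n, (0 < n)%N -> f.1 n ^+ p = 0.

From HB Require Import structures.
From mathcomp Require Import all_boot all_order all_algebra.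
Set Implicit Arguments. Unset Strict Implicit. Unset Printing Implicit Defensive.
Import GRing.Theory.
Local Open Scope ring_scope.

(* A point of ker rho_k is one whose generators x_i satisfy x_i^p = 0, with
   moreover tau_0 = 0 when tau_0 survives in A_p<k+1>; this is exactly the
   condition of factoring through A_p<k> / I_p^<k>.  For such points every
   term x_(n-j)^(p^j) with 0 < j < n of the coproduct formula vanishes, so the
   group law becomes x_n |-> f x_n + g x_n and t_n |-> f t_n + g t_n, which is
   commutative.  Neither the grading nor the degrees of the generators enter:
   both statements hold for arbitrary pairs of functions into any ring. *)

Lemma has_tauS (p k i : nat) :
  has_tau p k.+1 i = [&& p != 2%N, k == 0%N & i == 0%N].
Proof. by rewrite /has_tau eqSS; case: (p != 2%N); case: (k == 0%N). Qed.

Lemma in_kerP (p k : nat) (R : pzRingType) (f : pt R) :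
  in_ker p k f <->
  (forall i, (0 < i)%N -> f.1 i ^+ p = 0) /\
  ((p != 2%N) && (k == 0%N) -> f.2 0%N = 0).
Proof.
split=> [[Kx Kt] | [Kx Kt]].
  by split=> [// | /andP[p2 k0]]; apply: Kt; rewrite has_tauS p2 k0.
split=> // i; rewrite has_tauS => /and3P[p2 k0 /eqP ->].
by apply: Kt; rewrite p2 k0.
Qed.

Lemma in_ker_kills_I (p k : nat) (R : pzRingType) (f : pt R) :
  in_ker p k f <-> kills_I p k f.
Proof.
apply: (iff_trans (in_kerP p k f)); rewrite /kills_I.
case: eqP => [-> | _] /=.
  by split=> [[] | Kx].
case: eqP => [_ | _] /=; last by split=> [[] | Kx].
by split=> [[Kx Kt] | [Kt Kx]]; split=> //; apply: Kt.
Qed.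

Lemma big_ord_ends (R : pzRingType) (F : nat -> R) (n : nat) :
  (0 < n)%N -> (forall j, (0 < j < n)%N -> F j = 0) ->
  \sum_(j < n.+1) F j = F 0%N + F n.
Proof.
case: n => [// | n] _ F0.
rewrite big_ord_recl big_ord_recr /= big1 ?add0r // => j _.
by apply: F0; rewrite /bump /= ltnS ltn_ord.
Qed.

Lemma expr_expn_eq0 (R : pzRingType) (p j : nat) (x : R) :
  (0 < p)%N -> x ^+ p = 0 -> (0 < j)%N -> x ^+ (p ^ j) = 0.
Proof.
move=> p_gt0 xp0; case: j => [// | j] _.
by rewrite expnS exprM xp0 expr0n expn_eq0 eqn0Ngt p_gt0.
Qed.

Lemma xv_gt0 (R : pzRingType) (f : pt R) (i : nat) :
  (0 < i)%N -> xv f i = f.1 i.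
Proof. by rewrite /xv lt0n => /negbTE ->. Qed.

Lemma ptmul2_0 (p : nat) (R : pzRingType) (f g : pt R) :
  (ptmul p f g).2 0%N = g.2 0%N + f.2 0%N.
Proof. by rewrite /= big_ord1 expr1n mul1r. Qed.

Section KernelLaw.

Variables (p : nat) (R : pzRingType) (f g : pt R).
Hypothesis p_gt0 : (0 < p)%N.
Hypothesis f_ker : forall i, (0 < i)%N -> f.1 i ^+ p = 0.

Lemma xv_ker_middle (n j : nat) : (0 < j < n)%N -> xv f (n - j) ^+ (p ^ j) = 0.
Proof.
case/andP=> j_gt0 jn; have nj_gt0 : (0 < n - j)%N by rewrite subn_gt0.
by rewrite xv_gt0 // expr_expn_eq0 // f_ker.
Qed.

Lemma ptmul1_ker (n : nat) : (0 < n)%N -> (ptmul p f g).1 n = g.1 n + f.1 n.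
Proof.
move=> n_gt0.
rewrite /= (big_ord_ends (F := fun j => xv f (n - j) ^+ (p ^ j) * xv g j)) //.
  rewrite subn0 subnn expn0 expr1 !(xv_gt0 _ n_gt0) /xv /=.
  by rewrite expr1n mulr1 mul1r addrC.
by move=> j /xv_ker_middle ->; rewrite mul0r.
Qed.

Lemma ptmul2_ker (n : nat) : g.2 0%N = 0 -> (ptmul p f g).2 n = g.2 n + f.2 n.
Proof.
move=> g0; case: n => [|n]; first exact: ptmul2_0.
rewrite /= (big_ord_ends (F := fun j => xv f (n.+1 - j) ^+ (p ^ j) * g.2 j)) //.
  by rewrite g0 mulr0 add0r subnn expr1n mul1r.
by move=> j /xv_ker_middle ->; rewrite mul0r.
Qed.

End KernelLaw.

Theorem proposition4p5 (p : nat) (pp : prime p) (k : nat)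
  (R : pzRingType) (hom : int -> pred R) (HR : is_gcalg p hom)
  (f g : pt R) (Hf : is_point p k hom f) (Hg : is_point p k hom g) :
  (in_ker p k f <-> kills_I p k f) /\
  (in_ker p k f -> in_ker p k g -> samept p k (ptmul p f g) (ptmul p g f)).
Proof.
split; first exact: in_ker_kills_I.
have p_gt0 := prime_gt0 pp.
move=> /in_kerP[fx ft] /in_kerP[gx gt]; split=> [n n_gt0 | n].
  by rewrite !ptmul1_ker // addrC.
rewrite /has_tau => /andP[p2 /orP[/eqP k0 | /andP[_ /eqP ->]]].
  have p2k0 : (p != 2%N) && (k == 0%N) by rewrite p2 k0.
  by rewrite !ptmul2_ker ?ft ?gt // addrC.
by rewrite !ptmul2_0 addrC.
Qed.
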